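(* Let $X=(T,E)$ and $Y=(Z,F)$ be colored graphs and $W$ the fundamental magic biunitary of $A(X*Y)$. For each $\alpha\in Z$, the matrix $U^\alpha=(U^\alpha_{ij})_{i,j\in T}$ with $$U^\alpha_{ij}=\sum_{\beta\in Z}W_{i\alpha,j\beta}$$ is a magic biunitary.
   Context: A colored graph $X=(V,E)$ is a finite set $V$ with a partition $E=\{E_1,\dots,E_p\}$ of $(V\times V)-\Delta_V$. Free product: $X*Y$ has vertex set $T\times Z$ and partition $\{E_r^\circ\}\cup\{F_s^\circ\}$, $E_r^\circ=\{(i\alpha,j\alpha)\mid(i,j)\in E_r,\alpha\in Z\}$, $F_s^\circ=\{(i\alpha,j\beta)\mid i,j\in T,(\alpha,\beta)\in F_s\}$. A magic biunitary is a square matrix of projections whose rows and columns are partitions of unity. $A(X*Y)$ is the quotient of the universal C*-algebra generated by the entries of a $|T||Z|\times|T||Z|$ magic biunitary $W$ by the relations $Wd=dW$, $d$ the Laplacian of $X*Y$ ($d_{xx}=0$, $d_{xy}=c(k)$ for $(x,y)$ in the $k$-th class, $c$ injective into ${\mathbb C}$). *)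

From mathcomp Require Import all_boot all_algebra.
From mathcomp Require Import complex.
From mathcomp Require Import reals.
Set Implicit Arguments. Unset Strict Implicit. Unset Printing Implicit Defensive.
Import GRing.Theory Num.Theory.
Local Open Scope ring_scope.

(* A unital C*-algebra over the complex numbers C = R[i] (R the real numbers):
   a (unital, associative) C-algebra A with an involution [star] and a norm
   [nrm] (taking nonnegative, hence real, values in C) satisfying the usual
   axioms, the C*-identity, and completeness. *)
Record cstar_axioms (R : realType) (A : algType R[i])
    (star : A -> A) (nrm : A -> R[i]) : Prop := CstarAxioms {
  star_add : forall x y : A, star (x + y) = star x + star y;
  star_scale : forall (a : R[i]) (x : A), star (a *: x) = a^* *: star x;
  star_mul : forall x y : A, star (x * y) = star y * star x;
  star_invol : forall x : A, star (star x) = x;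
  nrm_ge0 : forall x : A, 0 <= nrm x;
  nrm_eq0 : forall x : A, nrm x = 0 -> x = 0;
  nrm_triangle : forall x y : A, nrm (x + y) <= nrm x + nrm y;
  nrm_scale : forall (a : R[i]) (x : A), nrm (a *: x) = `|a| * nrm x;
  nrm_submul : forall x y : A, nrm (x * y) <= nrm x * nrm y;
  nrm_cstar : forall x : A, nrm (star x * x) = nrm x ^+ 2;
  nrm_complete : forall u : nat -> A,
    (forall e : R[i], 0 < e -> exists N : nat, forall m n : nat,
        (N <= m)%N -> (N <= n)%N -> nrm (u m - u n) < e) ->
    exists l : A, forall e : R[i], 0 < e -> exists N : nat, forall n : nat,
        (N <= n)%N -> nrm (u n - l) < e
}.

Definition is_projection (A : ringType) (star : A -> A) (p : A) : Prop :=
  star p = p /\ p * p = p.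

Definition partition_of_unity (A : ringType) (star : A -> A) (I : finType)
    (p : I -> A) : Prop :=
  [/\ forall i, is_projection star (p i),
      forall i j, i != j -> p i * p j = 0
    & \sum_(i : I) p i = 1].

Definition magic_biunitary (A : ringType) (star : A -> A) (I : finType)
    (M : I -> I -> A) : Prop :=
  (forall i, partition_of_unity star (fun j => M i j)) /\
  (forall j, partition_of_unity star (fun i => M i j)).

(* Colored graph X = (V, E): the partition E of (V x V) - Delta_V is encoded
   by a coloring col : V -> V -> K (only off-diagonal values matter);
   the classes are the nonempty fibers of col on off-diagonal pairs. *)

(* Class of an off-diagonal pair in the free product X * Y (vertex set T x Z,
   vertex (i, alpha) written i alpha): E_r^o when alpha = beta (and then
   (i,j) in E_r), F_s^o when (alpha, beta) in F_s. *)
Definition free_prod_color (T Z KX KY : finType)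
    (colX : T -> T -> KX) (colY : Z -> Z -> KY) (x y : T * Z) : KX + KY :=
  if x.2 == y.2 then inl (colX x.1 y.1) else inr (colY x.2 y.2).

Definition laplacian (C : ringType) (V K : finType) (col : V -> V -> K)
    (c : K -> C) (x y : V) : C :=
  if x == y then 0 else c (col x y).

Definition commutes_with_scalar_matrix (C : comRingType) (A : algType C)
    (V : finType) (W : V -> V -> A) (d : V -> V -> C) : Prop :=
  forall x z : V,
    \sum_(y : V) W x y * (d y z)%:A = \sum_(y : V) (d x y)%:A * W y z.

From mathcomp Require Import all_boot all_algebra.
From mathcomp Require Import complex.
From mathcomp Require Import reals.
Set Implicit Arguments. Unset Strict Implicit. Unset Printing Implicit Defensive.
Import GRing.Theory Num.Theory.
Local Open Scope ring_scope.

(* A magic biunitary W commuting with the Laplacian d satisfies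
   W_{x a} W_{b z} = 0 whenever d_{a z} <> d_{x b}.  In X * Y the colors of
   type E and F never coincide, which makes the blocks W_{i alpha, j beta}
   orthogonal as soon as they mix a "horizontal" and a "vertical" move.
   Rows of U^alpha are then sums of disjoint parts of rows of W.  For the
   columns, the partial sums  sum_j W_{i alpha, j beta}  and
   sum_i W_{i alpha, j beta}  are self-adjoint and absorb each other, hence are
   independent of i (resp. j), and counting the double sum over i, j shows they
   agree; summing over beta turns column sums of U^alpha into a row sum of W. *)

Section Involution.

Variables (A : nzRingType) (star : A -> A).
Hypothesis star_addH : {morph star : x y / x + y}.
Hypothesis star_mulH : forall x y, star (x * y) = star y * star x.

Lemma selfadjoint_sum (I : finType) (F : I -> A) :
  (forall i, star (F i) = F i) -> star (\sum_i F i) = \sum_i F i.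
Proof.
move=> FE; have star0 : star 0 = 0.
  by apply: (addrI (star 0)); rewrite addr0 -star_addH addr0.
by rewrite (big_morph star star_addH star0); apply: eq_bigr.
Qed.

Lemma selfadjoint_absorb_eq (p q : A) :
  star p = p -> star q = q -> p = p * q -> q = q * p -> p = q.
Proof. by move=> sp sq pq qp; rewrite -sp pq star_mulH sp sq -qp. Qed.

Lemma selfadjoint_absorb_const (I : eqType) (P : I -> A) :
  (forall i, star (P i) = P i) -> (forall i k, i != k -> P i = P i * P k) ->
  forall i k, P i = P k.
Proof.
move=> sP absP i k; have [-> //|ik] := eqVneq i k.
by apply: selfadjoint_absorb_eq; rewrite ?sP //; apply: absP; rewrite // eq_sym.
Qed.

End Involution.

Lemma partition_of_unity_mul (A : nzRingType) (star : A -> A) (I : finType)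
    (p : I -> A) :
  (forall i, star (p i) = p i) ->
  (forall i j, p i * p j = if i == j then p i else 0) ->
  \sum_i p i = 1 -> partition_of_unity star p.
Proof.
move=> sp pp p1; split=> // [i | i j /negbTE ij]; last by rewrite pp ij.
by split; rewrite ?pp ?eqxx.
Qed.

Lemma lmod_mulrnI (K : numFieldType) (V : lmodType K) (n : nat) (x y : V) :
  (0 < n)%N -> x *+ n = y *+ n -> x = y.
Proof.
move=> n_gt0; have n_neq0 : n%:R != 0 :> K by rewrite pnatr_eq0 -lt0n.
by move/(congr1 (fun v => n%:R^-1 *: v)); rewrite -!scaler_nat !scalerK.
Qed.

Section MagicBiunitary.

Variables (A : nzRingType) (star : A -> A) (I : finType) (M : I -> I -> A).
Hypothesis hM : magic_biunitary star M.

Lemma magic_selfadjoint x y : star (M x y) = M x y.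
Proof. by have [hp _ _] := hM.1 x; have [] := hp y. Qed.

Lemma magic_sum_row x : \sum_y M x y = 1.
Proof. by have [_ _] := hM.1 x. Qed.

Lemma magic_sum_col y : \sum_x M x y = 1.
Proof. by have [_ _] := hM.2 y. Qed.

Lemma magic_mul_row x a y : M x a * M x y = if y == a then M x a else 0.
Proof.
have [hp ho _] := hM.1 x; have [->|ya] := eqVneq y a; first by have [] := hp a.
by apply: ho; rewrite eq_sym.
Qed.

Lemma magic_mul_col y z b : M y z * M b z = if y == b then M b z else 0.
Proof.
have [hp ho _] := hM.2 z; have [->|yb] := eqVneq y b; first by have [] := hp b.
exact: ho.
Qed.

End MagicBiunitary.

(* The two evaluations of  W_{x a} (W d) W_{b z} = W_{x a} (d W) W_{b z}
   are d_{a z} W_{x a} W_{b z} and d_{x b} W_{x a} W_{b z}. *)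
Lemma magic_commute_mul_eq0 (K : fieldType) (A : algType K) (star : A -> A)
    (I : finType) (M : I -> I -> A) (d : I -> I -> K) :
  magic_biunitary star M -> commutes_with_scalar_matrix M d ->
  forall x a b z, d a z != d x b -> M x a * M b z = 0.
Proof.
move=> hM hMd x a b z dne.
have Md : M x a * (\sum_y M x y * (d y z)%:A) * M b z =
           d a z *: (M x a * M b z).
  rewrite mulr_sumr mulr_suml (bigD1 a) //= big1 ?addr0 => [|y ya].
    by rewrite mulrA (magic_mul_row hM) eqxx mulr_algr -scalerAl.
  by rewrite mulrA (magic_mul_row hM) (negbTE ya) !mul0r.
have dM : M x a * (\sum_y (d x y)%:A * M y z) * M b z =
           d x b *: (M x a * M b z).
  rewrite mulr_sumr mulr_suml (bigD1 b) //= big1 ?addr0 => [|y yb].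
    by rewrite -!mulrA (magic_mul_col hM) eqxx mulrA mulr_algr -scalerAl.
  by rewrite -!mulrA (magic_mul_col hM) (negbTE yb) !mulr0.
have : (d a z - d x b) *: (M x a * M b z) = 0.
  by rewrite scalerBl -Md -dM hMd subrr.
by move/eqP; rewrite scaler_eq0 subr_eq0 (negbTE dne) => /eqP.
Qed.

Lemma sumr_pair (V : nmodType) (I J : finType) (F : I * J -> V) :
  \sum_p F p = \sum_i \sum_j F (i, j).
Proof. by rewrite pair_bigA; apply: eq_bigr => -[]. Qed.

Lemma mul_sum_fiber (A : nzRingType) (T Z : finType) (p : A) (q : T * Z -> A)
    (b : Z) :
  \sum_y q y = 1 -> (forall l e, e != b -> p * q (l, e) = 0) ->
  p = p * \sum_l q (l, b).
Proof.
move=> q1 pq; rewrite -{1}[p]mulr1 -q1 sumr_pair mulr_sumr [RHS]mulr_sumr.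
apply: eq_bigr => l _; rewrite mulr_sumr (bigD1 b) //= big1 ?addr0 //.
by move=> e /pq.
Qed.

Section FreeProduct.

Variables (K : numFieldType) (A : algType K) (star : A -> A).
Hypothesis star_addH : {morph star : x y / x + y}.
Hypothesis star_mulH : forall x y : A, star (x * y) = star y * star x.
Variables (T Z KX KY : finType) (colX : T -> T -> KX) (colY : Z -> Z -> KY).
Variables (c : KX + KY -> K) (W : T * Z -> T * Z -> A).
Hypothesis c_inj : injective c.
Hypothesis hW : magic_biunitary star W.
Local Notation d := (laplacian (free_prod_color colX colY) c).
Hypothesis hWd : commutes_with_scalar_matrix W d.

Lemma free_prod_laplacian_vert (i j : T) (g : Z) :
  i != j -> d (i, g) (j, g) = c (inl (colX i j)).
Proof.
move=> ij; rewrite /laplacian /free_prod_color /= eqxx.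
by rewrite xpair_eqE eqxx andbT (negbTE ij).
Qed.

Lemma free_prod_laplacian_horiz (x y : T * Z) :
  x.2 != y.2 -> d x y = c (inr (colY x.2 y.2)).
Proof.
move=> xy; have /negbTE x_neq_y : x != y by apply: contraNneq xy => ->.
by rewrite /laplacian /free_prod_color x_neq_y (negbTE xy).
Qed.

Lemma free_prod_mul_eq0_row (i k j l : T) (g b e : Z) :
  i != k -> b != e -> W (i, g) (j, b) * W (k, g) (l, e) = 0.
Proof.
move=> ik be; apply: (magic_commute_mul_eq0 hW hWd).
rewrite free_prod_laplacian_horiz // free_prod_laplacian_vert //.
by apply/eqP => /c_inj.
Qed.

Lemma free_prod_mul_eq0_col (i j k l : T) (g h b : Z) :
  j != l -> g != h -> W (i, g) (j, b) * W (k, h) (l, b) = 0.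
Proof.
move=> jl gh; apply: (magic_commute_mul_eq0 hW hWd).
rewrite free_prod_laplacian_vert // free_prod_laplacian_horiz //.
by apply/eqP => /c_inj.
Qed.

Lemma selfadjoint_block_sum (I : finType) (F G : I -> T * Z) :
  star (\sum_u W (F u) (G u)) = \sum_u W (F u) (G u).
Proof. by apply: selfadjoint_sum => // u; apply: magic_selfadjoint hW _ _. Qed.

Lemma block_row_sum_const (g b : Z) (i k : T) :
  \sum_j W (i, g) (j, b) = \sum_j W (k, g) (j, b).
Proof.
pose P i := \sum_j W (i, g) (j, b); rewrite -/(P i) -/(P k).
apply: (selfadjoint_absorb_const star_mulH) => [? | {}i {}k ik].
  exact: selfadjoint_block_sum.
apply: (mul_sum_fiber (q := W (k, g))); first exact: magic_sum_row hW (k, g).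
move=> l e eb; rewrite mulr_suml big1 // => j _.
by apply: free_prod_mul_eq0_row; rewrite // eq_sym.
Qed.

Lemma block_col_sum_const (g b : Z) (j l : T) :
  \sum_i W (i, g) (j, b) = \sum_i W (i, g) (l, b).
Proof.
pose P j := \sum_i W (i, g) (j, b); rewrite -/(P j) -/(P l).
apply: (selfadjoint_absorb_const star_mulH) => [? | {}j {}l jl].
  exact: selfadjoint_block_sum.
apply: (mul_sum_fiber (q := fun y => W y (l, b))).
  exact: magic_sum_col hW (l, b).
move=> k h hg; rewrite /P mulr_suml big1 // => i _.
by apply: free_prod_mul_eq0_col; rewrite // eq_sym.
Qed.

Lemma block_row_col_sum_eq (g b : Z) (i j : T) :
  \sum_l W (i, g) (l, b) = \sum_k W (k, g) (j, b).
Proof.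
apply: (@lmod_mulrnI _ _ #|T|); first by apply/card_gt0P; exists i.
have e : \sum_(k : T) \sum_(l : T) W (k, g) (l, b) =
         \sum_(l : T) \sum_(k : T) W (k, g) (l, b) by exact: exchange_big.
rewrite (eq_bigr _ (fun k _ => block_row_sum_const g b k i)) in e.
by rewrite -!sumr_const e; apply: eq_bigr => l _; apply: block_col_sum_const.
Qed.

Variable alpha : Z.

Lemma block_sum_mul_row (i j k : T) :
  (\sum_b W (i, alpha) (j, b)) * (\sum_e W (i, alpha) (k, e)) =
  if j == k then \sum_b W (i, alpha) (j, b) else 0.
Proof.
rewrite mulr_suml; have [<-|/negbTE jk] := eqVneq j k.
  apply: eq_bigr => b _; rewrite mulr_sumr (bigD1 b) //= big1 ?addr0.
    by rewrite (magic_mul_row hW) eqxx.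
  by move=> e /negbTE eb; rewrite (magic_mul_row hW) xpair_eqE eb andbF.
apply: big1 => b _; rewrite mulr_sumr big1 // => e _.
by rewrite (magic_mul_row hW) xpair_eqE eq_sym jk.
Qed.

Lemma block_sum_mul_col (i k j : T) :
  (\sum_b W (i, alpha) (j, b)) * (\sum_e W (k, alpha) (j, e)) =
  if i == k then \sum_b W (i, alpha) (j, b) else 0.
Proof.
have [<-|ik] := eqVneq i k; first by rewrite block_sum_mul_row eqxx.
rewrite mulr_suml big1 // => b _; rewrite mulr_sumr big1 // => e _.
have [<-|be] := eqVneq b e; last exact: free_prod_mul_eq0_row.
by rewrite (magic_mul_col hW) xpair_eqE (negbTE ik).
Qed.

Lemma block_sum_magic :
  magic_biunitary star (fun i j : T => \sum_b W (i, alpha) (j, b)).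
Proof.
split=> [i | j]; apply: partition_of_unity_mul.
- by move=> j; apply: selfadjoint_block_sum.
- exact: block_sum_mul_row.
- by rewrite -sumr_pair (magic_sum_row hW).
- by move=> i; apply: selfadjoint_block_sum.
- by move=> i k; apply: block_sum_mul_col.
- rewrite exchange_big /=.
  rewrite (eq_bigr _ (fun b _ => esym (block_row_col_sum_eq alpha b j j))).
  by rewrite -exchange_big -sumr_pair (magic_sum_row hW).
Qed.

End FreeProduct.

Theorem lemma6p2 (R : realType) (T Z KX KY : finType)
    (colX : T -> T -> KX) (colY : Z -> Z -> KY)
    (c : KX + KY -> R[i]) (hc : injective c)
    (A : algType R[i]) (star : A -> A) (nrm : A -> R[i])
    (hA : cstar_axioms star nrm)
    (W : T * Z -> T * Z -> A)
    (hW : magic_biunitary star W)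
    (hWd : commutes_with_scalar_matrix W
             (laplacian (free_prod_color colX colY) c))
    (alpha : Z) :
  magic_biunitary star
    (fun i j : T => \sum_(beta : Z) W (i, alpha) (j, beta)).
Proof.
exact: (block_sum_magic (star_add hA) (star_mul hA) hc hW hWd alpha).
Qed.
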